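(* Let $(M,\mathcal M,m)$ be a probability space, $D_0\supseteq D_1\supseteq\cdots$ measurable sets with $m(D_N)\to0$ as $N\to\infty$, $\mathcal I\subseteq\mathcal M$ a sub-$\sigma$-algebra, and $\mathcal G_N:=\mathcal I\vee\sigma(A\in\mathcal M: A\subseteq D_N)$. Then, with $\mathcal N:=\{A\in\mathcal M:m(A)=0\}$, $\bigcap_{N=0}^\infty(\mathcal G_N\vee\mathcal N)\subseteq\mathcal I\vee\mathcal N$. *)

From HB Require Import structures.
From mathcomp Require Import all_boot all_order all_algebra.
From mathcomp Require Import all_classical all_reals all_analysis.
Set Implicit Arguments. Unset Strict Implicit. Unset Printing Implicit Defensive.
Import Order.TTheory GRing.Theory Num.Theory.
Local Open Scope classical_set_scope.
Local Open Scope ring_scope.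

Definition sigma_join (T : Type) (F G : set (set T)) : set (set T) :=
  <<s F `|` G >>.

Definition trace_sets (d : measure_display) (T : measurableType d) (D : set T)
  : set (set T) := [set A | measurable A /\ A `<=` D].

Definition null_sets (d : measure_display) (T : measurableType d)
  (R : realType) (m : set T -> \bar R) : set (set T) :=
  [set A | measurable A /\ m A = 0%E].

From HB Require Import structures.
From mathcomp Require Import all_boot all_order all_algebra.
From mathcomp Require Import all_classical all_reals all_analysis.
Set Implicit Arguments. Unset Strict Implicit. Unset Printing Implicit Defensive.
Import Order.TTheory GRing.Theory Num.Theory.
Local Open Scope classical_set_scope.
Local Open Scope ring_scope.

(* Every set of G_N v N agrees with some set B_N of I up to a null set outside
   D_N, because those sets form a sigma-algebra containing the generators.  For
   X in all the G_N v N, the liminf B of the B_N lies in I, and X + B is covered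
   by the null sets (X + B_N) \ D_N together with the null set of points lying in
   every D_N.  Hence X = B + (X + B) lies in I v N. *)

Lemma setYCC (T : Type) (A B : set T) : ~` A `+` ~` B = A `+` B.
Proof. by rewrite /setY !setDE !setCK setUC setIC [X in _ `|` X]setIC. Qed.

Lemma bigcup_setY_sub (T : Type) (A B : (set T)^nat) :
  \bigcup_k A k `+` \bigcup_k B k `<=` \bigcup_k (A k `+` B k).
Proof.
move=> x [[[k _ Akx] nBx]|[[k _ Bkx] nAx]]; exists k => //.
- by left; split => // Bkx; apply: nBx; exists k.
- by right; split => // Akx; apply: nAx; exists k.
Qed.

Lemma setY_liminf_sub (T : Type) (X : set T) (B D : (set T)^nat) :
  nonincreasing_seq D ->
  X `+` \bigcup_n \bigcap_k B (n + k)%N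
    `<=` \bigcup_n ((X `+` B n) `\` D n) `|` \bigcap_n D n.
Proof.
move=> niD x XBx; have [|nDx] := pselect ((\bigcap_n D n) x); first by right.
have [N _ nDN] : (\bigcup_n ~` D n) x by rewrite -setC_bigcap.
have nD_ge n : (N <= n)%N -> ~ D n x by move=> /niD /subsetPset DnN /DnN.
left; case: XBx => [[Xx nliminf]|[[k _ Bk] nXx]].
- have [j nBj] : exists j, ~ B (N + j)%N x.
    apply: contrapT => /forallNP nB; apply: nliminf.
    by exists N => // j _; exact: contrapT.
  exists (N + j)%N => //; split; first by left.
  exact/nD_ge/leq_addr.
- exists (k + N)%N => //; split; first by right; split => //; apply: Bk.
  exact/nD_ge/leq_addl.
Qed.

Lemma sigma_join_setY (T : pointedType) (F G : set (set T)) (X B : set T) :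
  F B -> G (X `+` B) -> sigma_join F G X.
Proof.
move=> FB GXB; rewrite -[X]set0Y -(setYK B) -setYA.
have sB : (F `|` G).-sigma.-measurable B by apply: sub_sigma_algebra; left.
have sBX : (F `|` G).-sigma.-measurable (B `+` X).
  by apply: sub_sigma_algebra; right; rewrite setYC.
change ((F `|` G).-sigma.-measurable (B `+` (B `+` X))).
by apply: measurableU; apply: measurableD.
Qed.

Lemma sigma_algebra_liminf (T : pointedType) (I : set (set T)) (B : (set T)^nat) :
  sigma_algebra setT I -> (forall n, I (B n)) ->
  I (\bigcup_n \bigcap_k B (n + k)%N).
Proof.
move=> sI IB; rewrite -(sigma_algebra_id sI).
change (I.-sigma.-measurable (\bigcup_n \bigcap_k B (n + k)%N)).
apply: bigcupT_measurable => n.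
by apply: bigcapT_measurable => k; apply: sub_sigma_algebra.
Qed.

Lemma measure_bigcap_cvg0 d (T : measurableType d) (R : realType)
    (mu : {measure set T -> \bar R}) (D : (set T)^nat) :
  (forall n, measurable (D n)) -> nonincreasing_seq D ->
  (mu (D 0%N) < +oo)%E -> mu (D n) @[n --> \oo] --> 0%E ->
  mu (\bigcap_n D n) = 0%E.
Proof.
move=> mD niD mD0 mD_0.
apply: (cvg_unique _ _ mD_0); first exact: ereal_hausdorff.
by apply: nonincreasing_cvg_mu => //; exact: bigcapT_measurable.
Qed.

Section approx_off.
Context d (T : measurableType d) (R : realType) (mu : {measure set T -> \bar R}).
Variable I : set (set T).
Hypotheses (sI : sigma_algebra setT I) (Imeas : I `<=` measurable).

Definition approx_off (E : set T) : set (set T) :=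
  [set A | measurable A /\ exists2 B, I B & mu.-negligible ((A `+` B) `\` E)].

Lemma sigma_algebra_approx_off E : sigma_algebra setT (approx_off E).
Proof.
have [I0 IC IU] := sI; split.
- split=> //; exists set0 => //; rewrite setYK set0D; exact: negligible_set0.
- move=> A [mA [B IB nAB]]; split; first exact: measurableD.
  by exists (setT `\` B); [exact: IC | rewrite !setTD setYCC].
- move=> A sA; split; first by apply: bigcupT_measurable => k; case: (sA k).
  have /choice[B IB] :
      forall k, exists B, I B /\ mu.-negligible ((A k `+` B) `\` E).
    by move=> k; have [_ [B]] := sA k; exists B.
  exists (\bigcup_k B k); first by apply: IU => k; case: (IB k).
  apply: (negligibleS _ (negligible_bigcup (fun k => (IB k).2))).
  by rewrite -setD_bigcupl; apply: setSD; exact: bigcup_setY_sub.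
Qed.

Lemma sigma_join_trace_null_sub_approx_off E :
  sigma_join (sigma_join I (trace_sets E)) (null_sets mu) `<=` approx_off E.
Proof.
have approx0 A : measurable A -> mu.-negligible (A `\` E) -> approx_off E A.
  by move=> mA nA; split => //; exists set0; [case: sI | rewrite setY0].
apply: smallest_sub; first exact: sigma_algebra_approx_off.
rewrite subUset; split; last first.
  by move=> A [mA A0]; apply: approx0 => //; exists A; split => // x [].
apply: smallest_sub; first exact: sigma_algebra_approx_off.
rewrite subUset; split=> A.
- move=> IA; split; first exact: Imeas.
  by exists A; rewrite // setYK set0D; exact: negligible_set0.
- move=> [mA AE]; apply: approx0 => //.
  by rewrite (_ : A `\` E = set0) ?setD_eq0 //; exact: negligible_set0.
Qed.

End approx_off.

Theorem lemma4p4 (d : measure_display) (M : measurableType d) (R : realType)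
  (m : probability M R) (D : nat -> set M) (I : set (set M))
  (hDmeas : forall N, measurable (D N))
  (hDdec : forall N, D N.+1 `<=` D N)
  (hDlim : (m (D N) @[N --> \oo] --> 0%E))
  (hIsig : sigma_algebra setT I) (hIsub : I `<=` measurable) :
  \bigcap_N sigma_join (sigma_join I (trace_sets (D N))) (null_sets m)
    `<=` sigma_join I (null_sets m).
Proof.
move=> X GX.
have niD : nonincreasing_seq D by apply/nonincreasing_seqP => n; apply/subsetPset.
have approxX N : approx_off m I (D N) X.
  exact: (sigma_join_trace_null_sub_approx_off hIsig hIsub (GX N Logic.I)).
have mX : measurable X by case: (approxX 0%N).
have /choice[B IB] : forall N, exists B, I B /\ m.-negligible ((X `+` B) `\` D N).
  by move=> N; have [_ [B]] := approxX N; exists B.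
pose L := \bigcup_n \bigcap_k B (n + k)%N.
have IL : I L := sigma_algebra_liminf hIsig (fun n => (IB n).1).
have mXL : measurable (X `+` L).
  by apply: measurableU; apply: measurableD => //; exact: hIsub.
have nDinf : m.-negligible (\bigcap_N D N).
  exists (\bigcap_N D N); split => //; first exact: bigcapT_measurable.
  apply: measure_bigcap_cvg0 => //.
  by rewrite (le_lt_trans (probability_le1 m (hDmeas 0%N))) ?ltry.
apply: (sigma_join_setY IL); split => //; apply: measure_negligible => //.
apply: (negligibleS (@setY_liminf_sub _ X B D niD)).
exact: negligibleU (negligible_bigcup (fun N => (IB N).2)) nDinf.
Qed.
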